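(* Let $k\ge 1$ be an integer, and fix $r>0$ and $0<\beta<1$. Then there exists a finite metric space $(X,\rho)$, equipped with the counting measure $\mu(A)=|A|$, such that (i) $M(X)=0$; (ii) $T_{k+1}(X)\le \dfrac{1}{(k+1)!}\,\beta\,|X|^{k+1}$; (iii) $|X|-\mu(\mathcal{X}^* )\ge \dfrac{1}{k+1}\,\beta^{1/k}\,|X|$, where $\mathcal{X}^*$ is an $r$-cluster structure of order $k$ of maximal measure in $X$.
   Context: For a metric space $(X,\rho)$ with a measure $\mu$ and a fixed $r>0$: an $s$-cluster is a measurable subset of $X$ of diameter at most $s$. For sets $A,B$, $\rho(A,B)=\inf\{\rho(x,y): x\in A, y\in B\}$. An $r$-cluster structure of order $k$ is a family $\mathcal{X}=\{X_1,\dots,X_k\}$ of $2r$-clusters with $\rho(X_i,X_j)\ge r$ for all $1\le i<j\le k$; its measure is $\mu(\mathcal{X})=\sum_{i=1}^k\mu(X_i)$. Define $M(X)=\frac12(\mu\otimes\mu)\{(x,y)\in X^2: r<\rho(x,y)\le 3r\}$ and, for an integer $m\ge1$, $T_m(X)=\frac{1}{m!}\mu^{\otimes m}\{(x_1,\dots,x_m)\in X^m: \rho(x_i,x_j)>r \text{ for all } 1\le i<j\le m\}$. *)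

From HB Require Import structures.
From mathcomp Require Import all_boot all_order all_algebra.
From mathcomp Require Import all_classical all_reals exp.
Set Implicit Arguments. Unset Strict Implicit. Unset Printing Implicit Defensive.
Import Order.TTheory GRing.Theory Num.Theory.
Local Open Scope ring_scope.

Section Defs.
Variables (R : realType) (T : finType) (rho : T -> T -> R).

Definition is_metric : Prop :=
  [/\ (forall x y, 0 <= rho x y),
      (forall x y, rho x y = 0 <-> x = y),
      (forall x y, rho x y = rho y x) &
      (forall x y z, rho x z <= rho x y + rho y z)].

(* an s-cluster: diameter at most s (every subset is measurable for the
   counting measure on a finite space) *)
Definition is_cluster (s : R) (A : {set T}) : Prop :=
  forall x y, x \in A -> y \in A -> rho x y <= s.

(* rho(A,B) >= r, i.e. inf over the finite set of pairs is >= r *)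
Definition set_dist_ge (r : R) (A B : {set T}) : Prop :=
  forall x y, x \in A -> y \in B -> r <= rho x y.

Definition is_cluster_structure (r : R) (k : nat) (Xs : 'I_k -> {set T}) : Prop :=
  (forall i, is_cluster (2 * r) (Xs i)) /\
  (forall i j : 'I_k, (i < j)%N -> set_dist_ge r (Xs i) (Xs j)).

Definition cs_measure (k : nat) (Xs : 'I_k -> {set T}) : nat :=
  \sum_(i < k) #|Xs i|.

Definition M_of (r : R) : R :=
  #|[set p : T * T | (r < rho p.1 p.2) && (rho p.1 p.2 <= 3 * r)]|%:R / 2.

Definition T_of (r : R) (m : nat) : R :=
  #|[set t : {ffun 'I_m -> T} |
      [forall i : 'I_m, forall j : 'I_m, (i < j)%N ==> (r < rho (t i) (t j))]]|%:R
  / (m`!)%:R.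

End Defs.

From HB Require Import structures.
From mathcomp Require Import all_boot all_order all_algebra.
From mathcomp Require Import all_classical all_reals exp.
From mathcomp Require Import lra ring.

(** The witness has [N - m] "near" points at mutual distance [r] and [m] "far"
    points at distance [4 r] from everything else.  No distance lies in
    [(r, 3 r]], so [M = 0].  The clusters of a cluster structure are disjoint
    and each contains at most one far point, so its measure is at most
    [N - m + k]; hence (iii) holds once [m >= g N + k], where
    [g = beta^(1/k) / (k+1)].  An [r]-separated tuple has at most one near
    coordinate, so [(k+1)! T_(k+1) <= m^(k+1) + (k+1)(N-m) m^k], which is
    [N^(k+1) x^k (k+1 - k x)] for [x = m / N].  At [x = g] this falls short of
    [((k+1) g)^k N^(k+1) = beta N^(k+1)] by at least [k g^(k+1) N^(k+1)], a margin
    that absorbs the rounding [x - g <= (k+1) / N] once [N] is large. *)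

Set Implicit Arguments.
Unset Strict Implicit.
Unset Printing Implicit Defensive.
Import Order.TTheory GRing.Theory Num.Theory.
Local Open Scope ring_scope.

Lemma card_bigcup_le (I T : finType) (F : I -> {set T}) :
  (#|\bigcup_i F i| <= \sum_i #|F i|)%N.
Proof.
elim/big_ind2: _ => [|m A n B leAm leBn|//]; first by rewrite cards0.
exact: leq_trans (leq_card_setU A B) (leq_add leAm leBn).
Qed.

Lemma card_bigcup_disjoint (I T : finType) (F : I -> {set T}) :
  (forall i j, i != j -> [disjoint F i & F j]) ->
  #|\bigcup_i F i| = (\sum_i #|F i|)%N.
Proof.
move=> disjF; rewrite -sum1_card (partition_disjoint_bigcup _ _ disjF).
by apply: eq_bigr => i _; rewrite sum1_card.
Qed.

Lemma card_ffun_at_most_one_in (I T : finType) (L : {set T}) :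
  (#|[set t : {ffun I -> T} |
      [forall i, forall j, (t i \in L) && (t j \in L) ==> (i == j)]]|
   <= #|~: L| ^ #|I| + #|I| * (#|L| * #|~: L| ^ #|I|.-1))%N.
Proof.
pose only_at i := [set t : {ffun I -> T} |
  t \in family (fun j => mem (if j == i then L else ~: L))].
have card_only_at i : #|only_at i| = (#|L| * #|~: L| ^ #|I|.-1)%N.
  rewrite cardsE card_family foldrE big_map big_enum (bigD1 i) //= eqxx.
  rewrite (eq_bigr (fun _ => #|~: L|)) => [|j /negPf -> //].
  by rewrite prod_nat_const cardC1.
set S := [set t | _].
have : S \subset [set t in ffun_on (mem (~: L))] :|: \bigcup_i only_at i.
  apply/fintype.subsetP => t; rewrite inE => /forallP one_in_L.
  case: (pickP (fun i => t i \in L)) => [i tiL | none_in_L].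
    apply/finset.setUP; right; apply/finset.bigcupP; exists i => //.
    rewrite inE; apply/familyP => j; case: eqP => [-> //| /eqP nij].
    rewrite inE; apply: contra nij => tjL.
    by have /forallP/(_ j) := one_in_L i; rewrite tiL tjL eq_sym.
  apply/finset.setUP; left; rewrite inE.
  by apply/ffun_onP => j; rewrite inE none_in_L.
move/subset_leq_card/leq_trans; apply; apply: leq_trans (leq_card_setU _ _) _ => /=.
rewrite cardsE card_ffun_on leq_add2l; apply: leq_trans (card_bigcup_le only_at) _.
by rewrite (eq_bigr _ (fun i _ => card_only_at i)) sum_nat_const.
Qed.

Section ClusterStructures.
Variables (R : realType) (T : finType) (rho : T -> T -> R) (r : R).

Lemma M_of_eq0 : (forall x y, rho x y <= r \/ 3 * r < rho x y) -> M_of rho r = 0.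
Proof.
move=> gap; rewrite /M_of (_ : [set p | _] = finset.set0) ?cards0 ?mul0r //.
apply/setP => -[x y]; rewrite !inE /=.
by case: (gap x y) => [le_r | gt_3r]; [rewrite ltNge le_r | rewrite leNgt gt_3r andbF].
Qed.

Variable k : nat.
Hypotheses (r_gt0 : 0 < r) (rho_xx : forall x, rho x x = 0).

Lemma cluster_structure_disjoint (Xs : 'I_k -> {set T}) :
  is_cluster_structure rho r Xs -> forall i j, i != j -> [disjoint Xs i & Xs j].
Proof.
case=> _ sep i j; rewrite -setI_eq0 => neq_ij; apply/set0Pn => -[x].
rewrite inE => /andP[xi xj].
have sep_x (i' j' : 'I_k) : (i' < j')%N -> x \in Xs i' -> x \in Xs j' -> False.
  move=> lt_ij xi' xj'; have := sep i' j' lt_ij x x xi' xj'.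
  by rewrite rho_xx leNgt r_gt0.
case: (ltngtP i j) => [lt|lt|/val_inj eq]; first exact: sep_x xi xj.
  exact: sep_x xj xi.
by rewrite eq eqxx in neq_ij.
Qed.

Lemma cs_measure_le (Xs : 'I_k -> {set T}) (L : {set T}) :
  is_cluster_structure rho r Xs ->
  (cs_measure Xs <= #|L| + \sum_i #|Xs i :\: L|)%N.
Proof.
move=> csXs; rewrite /cs_measure -(eq_bigr _ (fun i _ => cardsID L (Xs i))).
rewrite big_split leq_add2r -card_bigcup_disjoint.
  by apply/subset_leq_card/bigcupsP => i _; rewrite subsetIr.
move=> i j /(cluster_structure_disjoint csXs).
by apply: disjointW; rewrite subsetIl.
Qed.

End ClusterStructures.

Section TwoScaleSpace.
Variables (R : realType) (a b : R) (nnear nfar : nat).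

Definition two_scale : finType := ('I_nnear + 'I_nfar)%type.

Definition near : {set two_scale} :=
  [set x | if x is inl _ then true else false].

Definition two_scale_dist (x y : two_scale) : R :=
  if x == y then 0 else if (x \in near) && (y \in near) then a else b.

Lemma card_two_scale : #|two_scale| = (nnear + nfar)%N.
Proof. by rewrite card_sum !card_ord. Qed.

Lemma card_near : #|near| = nnear.
Proof.
have inl_inj : injective (@inl 'I_nnear 'I_nfar) by move=> ? ? [].
rewrite -[RHS]card_ord -cardsT -(card_imset _ inl_inj).
apply: eq_card => -[i|j]; rewrite !inE; first by rewrite imset_f ?inE.
by apply/esym/imsetP => -[].
Qed.

Lemma card_far : #|~: near| = nfar.
Proof. by apply/eqP; rewrite -(eqn_add2l #|near|) cardsC card_two_scale card_near. Qed.

Lemma two_scale_dist_xx x : two_scale_dist x x = 0.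
Proof. by rewrite /two_scale_dist eqxx. Qed.

Lemma two_scale_dist_far x y :
  x != y -> (x \notin near) || (y \notin near) -> two_scale_dist x y = b.
Proof. by rewrite /two_scale_dist => /negPf -> /orP[] /negPf ->; rewrite ?andbF. Qed.

Lemma two_scale_dist_near x y :
  x != y -> x \in near -> y \in near -> two_scale_dist x y = a.
Proof. by rewrite /two_scale_dist => /negPf -> -> ->. Qed.

Lemma two_scale_metric : 0 < a -> 0 < b -> a <= 2 * b -> is_metric two_scale_dist.
Proof.
move=> a_gt0 b_gt0 a_le2b.
have dist_ge x y : x != y -> a / 2 <= two_scale_dist x y.
  by rewrite /two_scale_dist => /negPf ->; case: ifP => _; lra.
have dist_ge0 x y : 0 <= two_scale_dist x y.
  have [->|/dist_ge] := eqVneq x y; rewrite ?two_scale_dist_xx //; lra.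
split=> // [x y|x y|x y z].
- split=> [dxy0|->]; last exact: two_scale_dist_xx.
  have [//|/dist_ge] := eqVneq x y; rewrite dxy0 => ?; exfalso; lra.
- by rewrite /two_scale_dist eq_sym andbC.
have [->|nxz] := eqVneq x z; first by rewrite two_scale_dist_xx addr_ge0.
have [<-|nxy] := eqVneq x y; first by rewrite two_scale_dist_xx add0r.
have [<-|nyz] := eqVneq y z; first by rewrite two_scale_dist_xx addr0.
have [/andP[xn zn]|] := boolP ((x \in near) && (z \in near)).
  rewrite two_scale_dist_near //.
  by have := dist_ge _ _ nxy; have := dist_ge _ _ nyz; lra.
rewrite negb_and => far; rewrite two_scale_dist_far //.
case/orP: far => [xf|zf].
  by rewrite (two_scale_dist_far nxy) ?xf // lerDl.
by rewrite (two_scale_dist_far nyz) ?zf ?orbT // lerDr.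
Qed.

Variable r : R.

Lemma card_cluster_far_le1 (A : {set two_scale}) :
  2 * r < b -> is_cluster two_scale_dist (2 * r) A -> (#|A :\: near| <= 1)%N.
Proof.
move=> b_gt clA; apply/card_le1_eqP => y x.
rewrite !finset.in_setD => /andP[yf yA] /andP[xf xA].
apply/eqP/contraT => nxy; have := clA x y xA yA.
by rewrite (two_scale_dist_far nxy) ?xf // leNgt b_gt.
Qed.

Lemma two_scale_M_of_eq0 : 0 <= a -> a <= r -> 3 * r < b -> M_of two_scale_dist r = 0.
Proof.
move=> a_ge0 a_le_r b_gt; apply: M_of_eq0 => x y; rewrite /two_scale_dist.
by case: eqP => _; [left; lra | case: ifP => _; [left | right]].
Qed.

Lemma two_scale_cs_measure_le k (Xs : 'I_k -> {set two_scale}) :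
  0 < r -> 2 * r < b -> is_cluster_structure two_scale_dist r Xs ->
  (cs_measure Xs <= nnear + k)%N.
Proof.
move=> r_gt0 b_gt csXs.
have := cs_measure_le r_gt0 two_scale_dist_xx near csXs.
move/leq_trans; apply; rewrite card_near leq_add2l -[leqRHS]card_ord -sum1_card.
by apply: leq_sum => i _; apply: card_cluster_far_le1 b_gt (csXs.1 i).
Qed.

Lemma card_separated_tuples_le n :
  0 <= a -> a <= r ->
  (#|[set t : {ffun 'I_n -> two_scale} |
      [forall i : 'I_n, forall j : 'I_n,
         (i < j)%N ==> (r < two_scale_dist (t i) (t j))%R]]|
   <= nfar ^ n + n * (nnear * nfar ^ n.-1))%N.
Proof.
move=> a_ge0 a_le_r.
have near_close x y : x \in near -> y \in near -> ~ r < two_scale_dist x y.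
  move=> xn yn; have [->|nxy] := eqVneq x y.
    by rewrite two_scale_dist_xx; lra.
  by rewrite two_scale_dist_near //; lra.
have := card_ffun_at_most_one_in 'I_n near; rewrite card_near card_far card_ord.
apply: leq_trans.
apply/subset_leq_card/fintype.subsetP => t; rewrite !inE => /forallP sep.
apply/forallP => i; apply/forallP => j; apply/implyP => /andP[ti tj].
case: (ltngtP i j) => [lt_ij|lt_ji|/val_inj -> //].
  by have /forallP/(_ j) := sep i; rewrite lt_ij => /(near_close _ _ ti tj).
by have /forallP/(_ i) := sep j; rewrite lt_ji => /(near_close _ _ tj ti).
Qed.

End TwoScaleSpace.

Arguments two_scale_dist {R} a b {nnear nfar}.

Section Arithmetic.
Variable R : realType.

Lemma exprn_sub_le (x y : R) n :
  0 <= y <= x -> x <= 1 -> x ^+ n - y ^+ n <= n%:R * (x - y).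
Proof.
case/andP=> y_ge0 y_le_x x_le1; elim: n => [|n IHn]; first by rewrite subrr mul0r.
have yn_le_xn : y ^+ n <= x ^+ n by rewrite lerXn2r ?nnegrE //; lra.
have yn_le1 : y ^+ n <= 1 by rewrite exprn_ile1 //; lra.
have : x * (x ^+ n - y ^+ n) <= x ^+ n - y ^+ n by rewrite ler_piMl ?subr_ge0.
have : y ^+ n * (x - y) <= x - y by rewrite ler_piMl ?subr_ge0.
by rewrite !exprS -natr1; lra.
Qed.

Lemma exprn_mul_affine_le (x g : R) k :
  0 <= g <= x -> x <= 1 -> k.+1%:R * (x - g) <= g ^+ k.+1 ->
  x ^+ k * (k.+1%:R - k%:R * x) <= (k.+1%:R * g) ^+ k.
Proof.
move=> /andP[g_ge0 g_le_x] x_le1 dev.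
have k_le : k.+1%:R <= k.+1%:R ^+ k :> R.
  case: k {dev} => [|k]; first by rewrite expr0.
  by apply: ler_eXnr; rewrite // ler1n.
have xk_ge0 : 0 <= x ^+ k by rewrite exprn_ge0 //; lra.
have gk_ge0 : 0 <= g ^+ k by rewrite exprn_ge0.
have c_ge0 : 0 <= k.+1%:R - k%:R * g.
  have : k%:R * g <= k%:R by apply: ler_piMr => //; lra.
  by rewrite -natr1; lra.
have xk_le : x ^+ k - g ^+ k <= k%:R * (x - g).
  by apply: exprn_sub_le; rewrite ?g_ge0.
apply: (@le_trans _ _ (x ^+ k * (k.+1%:R - k%:R * g))).
  by rewrite ler_wpM2l // lerB // ler_wpM2l.
apply: (@le_trans _ _ ((g ^+ k + k%:R * (x - g)) * (k.+1%:R - k%:R * g))).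
  by rewrite ler_wpM2r //; lra.
apply: (@le_trans _ _ (k.+1%:R * g ^+ k)); last by rewrite exprMn ler_wpM2r.
have : k%:R * (k.+1%:R * (x - g)) <= k%:R * (g * g ^+ k) by rewrite -exprS ler_wpM2l.
have : 0 <= k%:R * (x - g) * (k%:R * g) by rewrite !mulr_ge0 // subr_ge0.
rewrite -natr1; nra.
Qed.

Lemma separated_count_le (N m g : R) k :
  0 < N -> 0 <= g -> g * N <= m <= N -> k.+1%:R * (m - g * N) <= g ^+ k.+1 * N ->
  m ^+ k.+1 + k.+1%:R * ((N - m) * m ^+ k) <= (k.+1%:R * g) ^+ k * N ^+ k.+1.
Proof.
move=> N_gt0 g_ge0 /andP[gN_le_m m_le_N] dev.
have [x mE] : exists x, m = x * N by exists (m / N); rewrite divfK // gt_eqF.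
rewrite {m}mE in gN_le_m m_le_N dev *.
have g_le_x : g <= x by rewrite -(ler_pM2r N_gt0).
have x_le1 : x <= 1 by rewrite -(ler_pM2r N_gt0) mul1r.
have dev_x : k.+1%:R * (x - g) <= g ^+ k.+1.
  by rewrite -(ler_pM2r N_gt0) -mulrA mulrBl.
have -> : (x * N) ^+ k.+1 + k.+1%:R * ((N - x * N) * (x * N) ^+ k) =
          x ^+ k * (k.+1%:R - k%:R * x) * N ^+ k.+1.
  by rewrite !exprMn !exprS -natr1; ring.
apply: ler_wpM2r; first by rewrite exprn_ge0 ?ltW.
by apply: exprn_mul_affine_le; rewrite ?g_ge0.
Qed.

Lemma exists_sizes (g : R) k : 0 < g <= 1 / 2 ->
  exists N m : nat, [/\ (0 < N)%N, g * N%:R + k%:R <= m%:R, (m <= N)%N &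
                        k.+1%:R * (m%:R - g * N%:R) <= g ^+ k.+1 * N%:R].
Proof.
case/andP=> g_gt0 g_le_half.
have gk_gt0 : 0 < g ^+ k.+1 by rewrite exprn_gt0.
have gk_le_half : g ^+ k.+1 <= 1 / 2.
  have : g ^+ k <= 1 by apply: exprn_ile1; lra.
  by rewrite exprS; nra.
have [N N_gt0 N_big] : exists2 N : nat, (0 < N)%N & k.+1%:R ^+ 2 < g ^+ k.+1 * N%:R.
  exists (Num.truncn (k.+1%:R ^+ 2 / g ^+ k.+1)).+1 => //.
  by rewrite mulrC -ltr_pdivrMr // truncnS_gt.
have gN_ge0 : 0 <= g * N%:R by rewrite mulr_ge0 ?ler0n ?ltW.
have [n n_gt n_le] : exists2 n : nat, g * N%:R < n%:R & n%:R <= g * N%:R + 1.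
  exists (Num.truncn (g * N%:R)).+1; first exact: truncnS_gt.
  by have := truncn_le (g * N%:R); rewrite gN_ge0 -natr1; lra.
have dev : k.+1%:R * ((n + k)%:R - g * N%:R) <= g ^+ k.+1 * N%:R.
  apply: le_trans (ltW N_big); rewrite expr2 ler_wpM2l // natrD -natr1; lra.
exists N, (n + k)%N; split=> //; first by rewrite natrD; lra.
rewrite -(ler_nat R).
have : (n + k)%:R - g * N%:R <= k.+1%:R * ((n + k)%:R - g * N%:R) :> R.
  rewrite -natr1 mulrDl mul1r lerDr mulr_ge0 // subr_ge0 natrD.
  by have := ler0n R k; lra.
have : g ^+ k.+1 * N%:R <= 1 / 2 * N%:R :> R by apply: ler_wpM2r.
have : g * N%:R <= 1 / 2 * N%:R :> R by apply: ler_wpM2r.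
lra.
Qed.

Lemma nat_root_bounds (beta : R) k : (0 < k)%N -> 0 < beta -> beta <= 1 ->
  [/\ 0 < beta `^ k%:R^-1, beta `^ k%:R^-1 <= 1 & (beta `^ k%:R^-1) ^+ k = beta].
Proof.
move=> k_gt0 beta_gt0 beta_le1; have root_gt0 := powR_gt0 k%:R^-1 beta_gt0.
have root_k : (beta `^ k%:R^-1) ^+ k = beta.
  by rewrite -powR_mulrn ?ltW // -powRrM mulVf ?powRr1 ?ltW // pnatr_eq0 -lt0n.
by split=> //; rewrite leNgt -(expr_gt1 k_gt0) ?ltW // root_k -leNgt.
Qed.

End Arithmetic.

Theorem mainTheorem1 (R : realType) (k : nat) (r beta : R) :
  (1 <= k)%N -> 0 < r -> 0 < beta -> beta < 1 ->
  exists (T : finType) (rho : T -> T -> R),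
    [/\ is_metric rho,
        (0 < #|T|)%N,
        M_of rho r = 0,
        T_of rho r k.+1 <= (k.+1`!)%:R^-1 * beta * (#|T|%:R) ^+ k.+1 &
        forall Xs : 'I_k -> {set T},
          is_cluster_structure rho r Xs ->
          (forall Ys : 'I_k -> {set T},
             is_cluster_structure rho r Ys -> (cs_measure Ys <= cs_measure Xs)%N) ->
          (k.+1%:R)^-1 * beta `^ (k%:R)^-1 * #|T|%:R <= #|T|%:R - (cs_measure Xs)%:R].
Proof.
move=> k_ge1 r_gt0 beta_gt0 beta_lt1.
have [] := nat_root_bounds k_ge1 beta_gt0 (ltW beta_lt1).
set gamma := beta `^ k%:R^-1 => gamma_gt0 gamma_le1 gamma_k.
pose g := k.+1%:R^-1 * gamma.
have g_bounds : 0 < g <= 1 / 2.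
  have two_le : 2 <= k.+1%:R :> R by rewrite ler_nat ltnS.
  by rewrite /g mulr_gt0 ?invr_gt0 //= mulrC ler_pdivrMr; lra.
have gamma_E : gamma = k.+1%:R * g by rewrite /g mulVKf ?pnatr_eq0.
have [N [m [N_gt0 m_ge m_le dev]]] := exists_sizes k g_bounds.
exists (two_scale (N - m) m), (two_scale_dist r (4 * r)).
have card_N : #|two_scale (N - m) m| = N by rewrite card_two_scale subnK.
split.
- by apply: two_scale_metric; lra.
- by rewrite card_N.
- by apply: two_scale_M_of_eq0; lra.
- rewrite /T_of card_N mulrC -mulrA ler_wpM2l ?invr_ge0 //.
  apply: le_trans (_ : (m ^ k.+1 + k.+1 * ((N - m) * m ^ k))%N%:R <= _).
    by rewrite ler_nat card_separated_tuples_le //; lra.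
  rewrite natrD !natrM !natrX natrB // -gamma_k gamma_E.
  apply: separated_count_le => //; first by rewrite ltr0n.
    by case/andP: g_bounds => /ltW.
  by rewrite ler_nat m_le andbT; have := ler0n R k; lra.
- move=> Xs csXs _.
  have : (cs_measure Xs <= N - m + k)%N.
    by apply: two_scale_cs_measure_le csXs => //; lra.
  rewrite card_N -/g -(ler_nat R) natrD natrB //; lra.
Qed.
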